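(* Let $q$ be a prime power and let $d+1$ be a divisor of $q-1$. A $(d+1)$-divisible Dembowski–Ostrom polynomial $f\in\mathbb{F}_q[x]$ is differentially $d$-uniform if and only if $f$ is almost-$(d+1)$-to-1.
   Context: A polynomial $f\in\mathbb{F}_q[x]$, $q=p^n$, is Dembowski–Ostrom (DO) if it can be written as $\sum_{i,j=0}^{n-1}a_{ij}x^{p^i+p^j}$ when $q$ is odd, and as $\sum_{i\neq j}a_{ij}x^{2^i+2^j}$ when $q$ is even. For a divisor $k$ of $q-1$, $f$ is $k$-divisible if $f(x)=f'(x^k)$ for some map $f'$. $f$ is differentially $d$-uniform if $d=\max_{a\neq 0,\,b}|\{x: f(x+a)-f(x)=b\}|$. $f$ is almost-$k$-to-1 if there is a unique element of $\mathrm{Im}(f)$ with exactly one preimage and every other element of $\mathrm{Im}(f)$ has exactly $k$ preimages. *)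

From HB Require Import structures.
From mathcomp Require Import all_boot all_order all_algebra.
Set Implicit Arguments. Unset Strict Implicit. Unset Printing Implicit Defensive.
Import GRing.Theory.
Local Open Scope ring_scope.

Definition DO_poly (F : fieldType) (p n : nat) (f : {poly F}) : Prop :=
  exists a : 'I_n -> 'I_n -> F,
    if odd (p ^ n) then
      f = \sum_(i < n) \sum_(j < n) a i j *: 'X^(p ^ i + p ^ j)
    else
      f = \sum_(i < n) \sum_(j < n | i != j) a i j *: 'X^(p ^ i + p ^ j).

Definition k_divisible (F : fieldType) (k : nat) (f : F -> F) : Prop :=
  exists f' : F -> F, forall x, f x = f' (x ^+ k).

Definition diff_count (F : finFieldType) (f : F -> F) (a b : F) : nat :=
  #|[set x : F | f (x + a) - f x == b]|.

Definition diff_uniform (F : finFieldType) (f : F -> F) (d : nat) : Prop :=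
  \max_(a : F | a != 0 :> F) \max_(b : F) diff_count f a b = d.

Definition npreim (F : finFieldType) (f : F -> F) (y : F) : nat :=
  #|[set x : F | f x == y]|.

Definition almost_k_to_1 (F : finFieldType) (k : nat) (f : F -> F) : Prop :=
  exists y0 : F,
    [/\ npreim f y0 = 1%N,
        (forall y, npreim f y = 1%N -> y = y0) &
        (forall y, (exists x, f x = y) -> y != y0 -> npreim f y = k)].

From mathcomp Require Import all_boot all_order all_algebra.
From mathcomp Require Import all_field all_solvable.
From mathcomp Require Import ring.
Set Implicit Arguments. Unset Strict Implicit. Unset Printing Implicit Defensive.
Import GRing.Theory.
Local Open Scope ring_scope.

(* Let F = F_q and k = d+1 with k | q - 1, so that the group mu of k-th roots
   of unity in F has exactly k elements, and let g : F -> F be invariant under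
   multiplication by mu (this is what k-divisibility gives).  The proof links
   both sides of the equivalence to one statement about g, namely that for
   every a <> 0 the zero set of the derivative D_a g(x) = g(x+a) - g(x) is as
   small as invariance allows:   {x | D_a g(x) = 0} = {a/(z-1) | z in mu, z <> 1}.
   - This holds iff every fiber of g is an orbit {z x | z in mu}; for d > 0
     that is exactly the almost-(d+1)-to-1 property (the orbit of 0 is {0}).
   - It follows from differential d-uniformity, since the right-hand set
     already has d elements.  Conversely, a Dembowski-Ostrom polynomial is
     quadratic (each D_a g is affine, by additivity of Frobenius), so all
     nonempty fibers of D_a g have the same size as its zero set, namely d. *)

Section DifferenceOperators.
Variable V : zmodType.
Implicit Types (g : V -> V) (a x y : V).

Definition dderiv g a x := g (x + a) - g x.

Definition quadratic g :=
  forall a x y, dderiv g a (x + y) = dderiv g a x + dderiv g a y - dderiv g a 0.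

End DifferenceOperators.

Section QuadraticPolynomials.
Variable R : comNzRingType.
Implicit Types (u v : {poly R}) (a x : R).

Lemma dderiv_hornerD u v a x :
  dderiv (horner (u + v)) a x = dderiv (horner u) a x + dderiv (horner v) a x.
Proof. by rewrite /dderiv !hornerD; ring. Qed.

Lemma dderiv_hornerZ c u a x :
  dderiv (horner (c *: u)) a x = c * dderiv (horner u) a x.
Proof. by rewrite /dderiv !hornerZ; ring. Qed.

Lemma quadratic_hornerZ c u : quadratic (horner u) -> quadratic (horner (c *: u)).
Proof. by move=> qu a x y; rewrite !dderiv_hornerZ qu; ring. Qed.

Lemma quadratic_horner_sum (I : Type) (r : seq I) (P : pred I) (h : I -> {poly R}) :
  (forall i, P i -> quadratic (horner (h i))) ->
  quadratic (horner (\sum_(i <- r | P i) h i)).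
Proof.
move=> qh; apply: (big_ind (fun u => quadratic (horner u))) => // [a x y|u v qu qv a x y].
- by rewrite /dderiv !horner0 !subrr addr0 subr0.
- by rewrite !dderiv_hornerD qu qv; ring.
Qed.

(* In characteristic p, x |-> x^(p^i + p^j) = x^(p^i) x^(p^j) is a product of
   two additive maps, hence quadratic. *)
Lemma quadratic_frobenius_monomial p i j : p \in [pchar R] ->
  quadratic (horner ('X^(p ^ i + p ^ j) : {poly R})).
Proof.
move=> pchar_p.
have frobD m (s t : R) : (s + t) ^+ (p ^ m) = s ^+ (p ^ m) + t ^+ (p ^ m).
  apply: exprDn_pchar; rewrite (eq_pnat _ (pcharf_eq pchar_p)).
  by rewrite pnatX pnat_id ?orTb // (pcharf_prime pchar_p).
have p_gt0 : (0 < p)%N by rewrite prime_gt0 // (pcharf_prime pchar_p).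
move=> a x y; rewrite /dderiv !hornerXn !exprD !frobD !expr0n !expn_eq0.
by rewrite eqn0Ngt p_gt0 /= !add0r; ring.
Qed.

End QuadraticPolynomials.

Lemma DO_quadratic (F : finFieldType) (p n : nat) (f : {poly F}) :
  prime p -> #|F| = (p ^ n)%N -> DO_poly p n f -> quadratic (horner f).
Proof.
move=> p_prime cardF [c hf].
have pchar_p := card_finPcharP cardF p_prime.
by case: ifP hf => _ ->; apply: quadratic_horner_sum => i _;
  apply: quadratic_horner_sum => j _; apply: quadratic_hornerZ;
  exact: quadratic_frobenius_monomial.
Qed.

Section DerivativeFibers.
Variables (V : finZmodType) (g : V -> V).
Hypothesis g_quad : quadratic g.

Definition dfiber a b : {set V} := [set x | g (x + a) - g x == b].

(* Since D_a g is affine, translating by x1 - x0 maps its b-fiber into its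
   c-fiber whenever x0 lies in the first and x1 in the second. *)
Lemma quadratic_dfiber_le a b c x0 x1 : x0 \in dfiber a b -> x1 \in dfiber a c ->
  (#|dfiber a b| <= #|dfiber a c|)%N.
Proof.
rewrite !inE => /eqP Dx0 /eqP Dx1.
change (dderiv g a x0 = b) in Dx0; change (dderiv g a x1 = c) in Dx1.
have shift : dderiv g a (x1 - x0) - dderiv g a 0 = c - b.
  by rewrite -Dx1 -Dx0 -{2}(subrKC x0 x1) (g_quad a x0)
     (addrAC _ (- dderiv g a 0)) (addrAC (dderiv g a x0)) subrr add0r.
rewrite -(card_imset _ (addIr (x1 - x0))); apply/subset_leq_card/subsetP.
move=> y /imsetP[x]; rewrite !inE => /eqP Dx ->.
change (dderiv g a x = b) in Dx.
change (dderiv g a (x + (x1 - x0)) == c).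
by rewrite g_quad -addrA shift Dx subrKC eqxx.
Qed.

End DerivativeFibers.

Section RootsOfUnity.
Variable F : finFieldType.
Implicit Types (k : nat) (a x : F).

Definition unity_roots k : {set F} := [set z | z ^+ k == 1].

Definition root_orbit k x : {set F} := [set z * x | z in unity_roots k].

(* The points a / (z - 1), z a k-th root of unity other than 1: the zeros of
   x |-> g(x + a) - g(x) forced by invariance of g under the k-th roots. *)
Definition root_ratios k a : {set F} := [set a / (z - 1) | z in unity_roots k :\ 1].

(* F^* is cyclic of order #|F| - 1, so it contains primitive roots of every
   order dividing #|F| - 1. *)
Lemma finField_prim_root k : (k %| #|F|.-1)%N -> exists w : F, k.-primitive_root w.
Proof.
move=> k_dvd.
have F_gt0 : (0 < #|F|)%N by apply/card_gt0P; exists 0.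
have /hasP[z _ prim_z] : has (#|F|.-1).-primitive_root (enum [set~ (0 : F)]).
  apply: has_prim_root; last by rewrite -cardE cardsC1.
  - by rewrite -subn1 subn_gt0 finNzRing_gt1.
  - apply/allP => x; rewrite mem_enum !inE => x_neq0; rewrite unity_rootE.
    by apply/eqP/(mulIf x_neq0); rewrite -exprSr prednK ?expf_card ?mul1r.
  - exact: enum_uniq.
by exists (z ^+ (#|F|.-1 %/ k)); apply: dvdn_prim_root.
Qed.

Lemma card_unity_roots k : (k %| #|F|.-1)%N -> #|unity_roots k| = k.
Proof.
move=> /finField_prim_root[w prim_w].
have -> : unity_roots k = [set w ^+ i | i : 'I_k].
  apply/setP => z; rewrite inE; apply/eqP/imsetP => [/(prim_rootP prim_w)[i ->]|].
    by exists i.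
  by case=> i _ ->; rewrite exprAC (prim_expr_order prim_w) expr1n.
rewrite card_imset ?card_ord // => i j /eqP.
by rewrite (eq_prim_root_expr prim_w) !modn_small ?ltn_ord // => /eqP/val_inj.
Qed.

Lemma root_orbit0 k : root_orbit k 0 = [set 0].
Proof.
apply/setP => y; rewrite inE; apply/imsetP/eqP => [[z _ ->]|->]; first by rewrite mulr0.
by exists 1; rewrite ?inE ?expr1n ?mulr0.
Qed.

Lemma card_root_orbit k x : x != 0 -> #|root_orbit k x| = #|unity_roots k|.
Proof. by move=> x_neq0; rewrite card_imset //; apply: mulIf. Qed.

(* z |-> a / (z - 1) is injective for a <> 0, so there are k - 1 ratios. *)
Lemma card_root_ratios k a : a != 0 -> #|unity_roots k| = k ->
  #|root_ratios k a| = k.-1.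
Proof.
move=> a_neq0 card_mu; rewrite card_in_imset.
  by move: card_mu; rewrite (cardsD1 1) inE expr1n eqxx add1n => /(congr1 predn).
move=> z1 z2; rewrite !inE => /andP[z1_neq1 _] /andP[z2_neq1 _] /(mulfI a_neq0).
by move/invr_inj/addIr.
Qed.

End RootsOfUnity.

Section MapsOnFiniteFields.
Variables (F : finFieldType) (g : F -> F).

Definition fiber (x : F) : {set F} := [set y | g y == g x].

Lemma diff_count_le d a b : diff_uniform g d -> a != 0 ->
  (diff_count g a b <= d)%N.
Proof.
move=> <- a_neq0.
apply: (leq_trans _ (leq_bigmax_cond (F := fun a => \max_b diff_count g a b) a a_neq0)).
exact: (leq_bigmax_cond (F := fun b => diff_count g a b) b isT).
Qed.

(* Each equation g(x + 1) - g(x) = b has a solution for some b, so the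
   uniformity d is positive. *)
Lemma diff_uniform_gt0 d : diff_uniform g d -> (0 < d)%N.
Proof.
move=> g_unif; apply: (leq_trans _ (diff_count_le (g 1 - g 0) g_unif (oner_neq0 F))).
by apply/card_gt0P; exists 0; rewrite inE add0r.
Qed.

(* A map on a field cannot be almost-1-to-1: if y0 = g x0 is the value with
   a single preimage, then g (x0 + 1) is another value with one preimage. *)
Lemma almost_k_to_1_neq1 k : almost_k_to_1 k g -> k != 1%N.
Proof.
case=> y0 [y0_single single_y0 other_k]; apply/eqP => k1.
have /cards1P[x0 fiber_y0] : #|[set x | g x == y0]| == 1%N by apply/eqP.
have x1_neq : x0 + 1 != x0 by rewrite -subr_eq0 addrC addKr oner_neq0.
have [gx1|gx1_neq] := eqVneq (g (x0 + 1)) y0.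
  have : x0 + 1 \in [set x | g x == y0] by rewrite inE gx1.
  by rewrite fiber_y0 inE (negbTE x1_neq).
have := other_k (g (x0 + 1)) (ex_intro _ _ erefl) gx1_neq.
by rewrite k1 => /single_y0; apply/eqP.
Qed.

End MapsOnFiniteFields.

Lemma k_divisible_invariant (F : fieldType) (k : nat) (g : F -> F) :
  k_divisible k g -> forall z x, z ^+ k = 1 -> g (z * x) = g x.
Proof. by case=> g' hg' z x zk; rewrite !hg' exprMn zk mul1r. Qed.

Section InvariantMaps.
Variables (F : finFieldType) (d : nat) (g : F -> F).
Hypothesis g_inv : forall z x, z ^+ d.+1 = 1 -> g (z * x) = g x.

Lemma root_orbit_sub_fiber x : root_orbit d.+1 x \subset fiber g x.
Proof. by apply/subsetP => y /imsetP[z]; rewrite !inE => /eqP zk ->; rewrite g_inv. Qed.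

(* For a root z <> 1, the point x = a / (z - 1) satisfies x + a = z x. *)
Lemma root_ratios_sub_dfiber a : root_ratios d.+1 a \subset dfiber g a 0.
Proof.
apply/subsetP => x /imsetP[z]; rewrite !inE => /andP[z_neq1 /eqP zk] ->.
have z1_neq0 : z - 1 != 0 by rewrite subr_eq0.
have -> : a / (z - 1) + a = z * (a / (z - 1)) by field.
by rewrite (g_inv _ zk) subrr.
Qed.

(* The zero sets of the derivatives D_a g, a <> 0, are as small as invariance
   allows exactly when every fiber of g is a single orbit: a solution x of
   g (x + a) = g x is the same as two points x, x + a of one fiber. *)
Lemma dfiber_root_ratiosP :
  (forall a, a != 0 -> dfiber g a 0 = root_ratios d.+1 a) <->
  (forall x, fiber g x = root_orbit d.+1 x).
Proof.
split=> [zeros x | orbits a a_neq0]; apply/eqP; rewrite eqEsubset.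
- rewrite root_orbit_sub_fiber andbT; apply/subsetP => y; rewrite inE => /eqP gy.
  have [->|y_neq] := eqVneq y x.
    by apply/imsetP; exists 1; rewrite ?inE ?expr1n ?mul1r.
  have : x \in dfiber g (y - x) 0 by rewrite inE subrKC gy subrr.
  rewrite zeros ?subr_eq0 // => /imsetP[z]; rewrite !inE => /andP[z_neq1 zk] x_eq.
  apply/imsetP; exists z; rewrite ?inE //.
  have z1_neq0 : z - 1 != 0 by rewrite subr_eq0.
  have shift : x * (z - 1) = y - x by rewrite {1}x_eq mulfVK.
  by apply: (addIr (- x)); rewrite -shift; ring.
- rewrite root_ratios_sub_dfiber andbT; apply/subsetP => x; rewrite inE => /eqP Dx.
  have : x + a \in fiber g x by rewrite inE -subr_eq0 Dx.
  rewrite orbits => /imsetP[z]; rewrite inE => zk xa.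
  have z_neq1 : z != 1.
    by apply: contraNneq a_neq0 => z1; move: xa; rewrite z1 mul1r -{2}[x]addr0 => /addrI ->.
  apply/imsetP; exists z; first by rewrite !inE z_neq1.
  have z1_neq0 : z - 1 != 0 by rewrite subr_eq0.
  apply: (mulIf z1_neq0); rewrite mulfVK //.
  by rewrite (_ : a = z * x - x); [ring | rewrite -xa addrC addKr].
Qed.

Hypothesis card_mu : #|unity_roots F d.+1| = d.+1.

(* Differential d-uniformity bounds the zero set of D_a g, which already
   contains the d points of root_ratios. *)
Lemma diff_uniform_root_ratios : diff_uniform g d ->
  forall a, a != 0 -> dfiber g a 0 = root_ratios d.+1 a.
Proof.
move=> g_unif a a_neq0; apply/eqP; rewrite eq_sym eqEcard root_ratios_sub_dfiber /=.
by rewrite card_root_ratios //; apply: diff_count_le g_unif a_neq0.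
Qed.

Hypothesis d_gt0 : (0 < d)%N.

(* For quadratic g, every nonempty fiber of D_a g is a translate of its zero
   set, which has d elements: so g is differentially d-uniform. *)
Lemma root_ratios_diff_uniform : quadratic g ->
  (forall a, a != 0 -> dfiber g a 0 = root_ratios d.+1 a) -> diff_uniform g d.
Proof.
move=> g_quad zeros.
have card_zeros a : a != 0 -> #|dfiber g a 0| = d.
  by move=> a_neq0; rewrite zeros // card_root_ratios.
apply/eqP; rewrite eqn_leq; apply/andP; split.
- apply/bigmax_leqP => a a_neq0; apply/bigmax_leqP => b _.
  change (#|dfiber g a b| <= d)%N.
  have /card_gt0P[x0 x0_in] : (0 < #|dfiber g a 0%R|)%N by rewrite card_zeros.
  have [/eqP|[x x_in]] := set_0Vmem (dfiber g a b).
    by rewrite -cards_eq0 => /eqP ->.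
  by rewrite -(card_zeros a a_neq0); apply: (quadratic_dfiber_le g_quad x_in x0_in).
- rewrite -(card_zeros 1 (oner_neq0 F)).
  apply: (leq_trans _ (leq_bigmax_cond (F := fun a => \max_b diff_count g a b)
                                        1 (oner_neq0 F))).
  exact: (leq_bigmax_cond (F := fun b => diff_count g 1 b) 0 isT).
Qed.

(* With d > 0 the orbits of nonzero points have d + 1 >= 2 elements while the
   orbit of 0 is {0}, so "all fibers are orbits" is the almost-(d+1)-to-1
   property, the exceptional value being g 0. *)
Lemma orbit_fibers_almost :
  (forall x, fiber g x = root_orbit d.+1 x) <-> almost_k_to_1 d.+1 g.
Proof.
split=> [orbits | [y0 [y0_single single_y0 other_k]]].
  have card_fiber x : #|fiber g x| = if x == 0 then 1%N else d.+1.
    rewrite orbits; case: eqP => [->|/eqP x_neq0]; first by rewrite root_orbit0 cards1.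
    by rewrite card_root_orbit.
  exists (g 0); split.
  - by have := card_fiber 0; rewrite eqxx.
  - move=> y /eqP/cards1P[x fiber_y].
    have : x \in [set x0 | g x0 == y] by rewrite fiber_y set11.
    rewrite inE => /eqP gx.
    move: (card_fiber x); rewrite /fiber gx fiber_y cards1 -gx.
    by case: eqP => [->|_ [d_eq0]] //; move: d_gt0; rewrite -d_eq0.
  - move=> y [x <-] gx_neq; have x_neq0 : x != 0 by apply: contraNneq gx_neq => ->.
    by have := card_fiber x; rewrite (negbTE x_neq0).
have /cards1P[x0 fiber_y0] : #|[set x | g x == y0]| == 1%N by apply/eqP.
have : x0 \in [set x | g x == y0] by rewrite fiber_y0 set11.
rewrite inE => /eqP gx0.
have x0_eq0 : x0 = 0.
  apply/eqP; apply: contraLR d_gt0 => x0_neq0; rewrite -leqNgt.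
  have := subset_leq_card (root_orbit_sub_fiber x0).
  by rewrite card_root_orbit // card_mu /fiber gx0 fiber_y0 cards1.
subst x0; move=> x; apply/eqP; rewrite eq_sym eqEcard root_orbit_sub_fiber /=.
have [->|x_neq0] := eqVneq x 0; first by rewrite root_orbit0 /fiber gx0 fiber_y0.
rewrite card_root_orbit // card_mu (_ : #|fiber g x| = d.+1) //.
apply: other_k; first by exists x.
apply: contra x_neq0 => /eqP gx_y0.
by rewrite -in_set1 -fiber_y0 inE gx_y0.
Qed.

End InvariantMaps.

Theorem theorem3p3 (p n : nat) (F : finFieldType) (d : nat)
  (hp : prime p) (hcard : #|F| = (p ^ n)%N)
  (hdiv : (d.+1 %| p ^ n - 1)%N)
  (f : {poly F})
  (hDO : DO_poly p n f)
  (hk : k_divisible d.+1 (fun x => f.[x])) :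
  diff_uniform (fun x => f.[x]) d <-> almost_k_to_1 d.+1 (fun x => f.[x]).
Proof.
have g_quad : quadratic (fun x => f.[x]) := DO_quadratic hp hcard hDO.
have g_inv := k_divisible_invariant hk.
have card_mu : #|unity_roots F d.+1| = d.+1 by rewrite card_unity_roots // hcard -subn1.
split => [g_unif | g_almost].
- have d_gt0 := diff_uniform_gt0 g_unif.
  apply/(orbit_fibers_almost g_inv card_mu d_gt0)/(dfiber_root_ratiosP g_inv).
  exact: (diff_uniform_root_ratios g_inv card_mu g_unif).
- have d_gt0 : (0 < d)%N by rewrite lt0n -eqSS; apply: almost_k_to_1_neq1 g_almost.
  apply: (root_ratios_diff_uniform card_mu d_gt0 g_quad).
  exact/(dfiber_root_ratiosP g_inv)/(orbit_fibers_almost g_inv card_mu d_gt0).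
Qed.
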